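(* Let $\Gamma$ be a numerical semigroup with multiplicity $e$ and conductor $c$, let $\Gamma_e=\{0\}\cup(e+\Gamma)$ and $c'=c+e$. Then for every $k\in\mathbb N$ the following are equivalent: \begin{enumerate} \item $\delta^2_{\Gamma_e}(c'+e+k)=\delta^2_\Gamma(c+k)+2$; \item $\delta^1_\Gamma(c+e+k)=\delta^2_\Gamma(c+k)$. \end{enumerate}
   Context: A numerical semigroup is a subset $\Gamma\subseteq\mathbb N$ containing $0$, closed under addition, with finite complement; multiplicity = least positive element; conductor = least $c$ with $c+\mathbb N\subseteq\Gamma$. For a numerical semigroup $S$: $D_S(x)=\{s\in S:x-s\in S\}$, $\delta^1_S(m)=\min\{|D_S(m_1)|: m\le m_1\in S\}$, and $\delta^2_S(m)=\min\{|D_S(m_1)\cup D_S(m_2)|: m\le m_1<m_2,\ m_i\in S\}$. *)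

From mathcomp Require Import all_boot.
From Stdlib Require Import ClassicalEpsilon.
Set Implicit Arguments. Unset Strict Implicit. Unset Printing Implicit Defensive.

(* Least element of a set of naturals (unspecified if the set is empty). *)
Definition natmin (P : nat -> Prop) : nat :=
  epsilon (inhabits 0) (fun n => P n /\ forall k, P k -> n <= k).

Definition numerical_semigroup (G : nat -> bool) : Prop :=
  [/\ G 0,
      (forall a b, G a -> G b -> G (a + b)) &
      exists c, forall n, c <= n -> G n].

Definition multiplicity (G : nat -> bool) : nat := natmin (fun n => 0 < n /\ G n).

Definition conductor (G : nat -> bool) : nat :=
  natmin (fun c => forall n, c <= n -> G n).

Definition shiftsg (G : nat -> bool) (e : nat) : nat -> bool :=
  fun n => (n == 0) || ((e <= n) && G (n - e)).

Definition inD (G : nat -> bool) (x s : nat) : bool :=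
  [&& s <= x, G s & G (x - s)].

Definition cardD (G : nat -> bool) (x : nat) : nat :=
  count (inD G x) (iota 0 x.+1).

Definition cardD2 (G : nat -> bool) (x1 x2 : nat) : nat :=
  count (fun s => inD G x1 s || inD G x2 s) (iota 0 (maxn x1 x2).+1).

Definition delta1 (G : nat -> bool) (m : nat) : nat :=
  natmin (fun d => exists m1, [/\ m <= m1, G m1 & d = cardD G m1]).

Definition delta2 (G : nat -> bool) (m : nat) : nat :=
  natmin (fun d => exists m1 m2,
            [/\ m <= m1, m1 < m2, G m1, G m2 & d = cardD2 G m1 m2]).

(* For y >= c the shifted semigroup satisfies D_{Γ_e}(y + 2e) = {0, y + 2e} ∪ (e + D_Γ(y)).
   Hence for c <= y1 < y2 the union D_{Γ_e}(y1 + 2e) ∪ D_{Γ_e}(y2 + 2e) has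
   |D_Γ(y1) ∪ D_Γ(y2)| + 2 elements, plus one more unless y1 + e ∈ D_Γ(y2).  So
   δ²_{Γ_e}(c + k + 2e) >= δ²_Γ(c + k) + 2, with equality iff some optimal pair for Γ has
   y1 + e ∈ D_Γ(y2); then y2 - y1 ∈ Γ, so D_Γ(y1) ⊆ D_Γ(y2) and δ¹_Γ(c + e + k) <= δ²_Γ(c + k).
   Conversely the pairs (m - e, m) give δ²_Γ(c + k) <= δ¹_Γ(c + e + k) and
   δ²_{Γ_e}(c + k + 2e) <= δ¹_Γ(c + e + k) + 2. *)

From mathcomp Require Import all_boot zify.
From Stdlib Require Import Classical ClassicalEpsilon.
Set Implicit Arguments. Unset Strict Implicit. Unset Printing Implicit Defensive.

Lemma natminP (P : nat -> Prop) : (exists n, P n) ->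
  P (natmin P) /\ forall k, P k -> natmin P <= k.
Proof.
move=> [n Pn]; apply: (epsilon_spec (inhabits 0) (fun m => P m /\ _)).
elim/ltn_ind: n Pn => n IHn Pn.
have [[k [Pk lt_kn]]|no_smaller] := classic (exists k, P k /\ k < n).
  exact: IHn k lt_kn Pk.
exists n; split=> // k Pk; rewrite leqNgt; apply/negP => lt_kn.
by apply: no_smaller; exists k.
Qed.

Lemma count_iota_shift (Q : pred nat) e n :
  count (fun s => (e <= s) && Q (s - e)) (iota 0 (e + n)) = count Q (iota 0 n).
Proof.
rewrite iotaD count_cat add0n (eq_in_count (a2 := pred0)); last first.
  by move=> s; rewrite mem_iota => /andP[_ lt_se]; rewrite leqNgt lt_se.
rewrite count_pred0 -[e]addn0 iotaDl count_map addn0.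
by apply: eq_count => s /=; rewrite leq_addr addKn.
Qed.

Lemma count_iota_cut (Q : pred nat) m n : m <= n -> (forall t, Q t -> t < m) ->
  count Q (iota 0 n) = count Q (iota 0 m).
Proof.
move=> le_mn QP; rewrite -(subnKC le_mn) iotaD count_cat add0n.
rewrite [X in _ + X](eq_in_count (a2 := pred0)) ?count_pred0 ?addn0 //.
move=> t; rewrite mem_iota => /andP[le_mt _]; apply/negP => /QP; lia.
Qed.

Lemma count_pred1U (T : eqType) (a : T) (p : pred T) (s : seq T) : uniq s ->
  count (predU (pred1 a) p) s = count p s + ((a \in s) && ~~ p a).
Proof.
move=> s_uniq; have := count_predUI (pred1 a) p s.
have -> : count (predI (pred1 a) p) s = (a \in s) && p a.
  have [pa|npa] := boolP (p a).
    rewrite andbT -count_uniq_mem //; apply: eq_count => x /=.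
    by case: eqP => // ->; rewrite pa.
  rewrite andbF (eq_count (a2 := pred0)) ?count_pred0 // => x /=.
  by case: eqP => // ->; rewrite (negbTE npa).
rewrite count_uniq_mem //.
by case: (a \in s); case: (p a) => /=; lia.
Qed.

Lemma shiftsg_addn (G : nat -> bool) e n : 0 < e -> shiftsg G e (n + e) = G n.
Proof. by move=> e_gt0; rewrite /shiftsg addn_eq0 (gtn_eqF e_gt0) andbF leq_addl addnK. Qed.

Lemma inD_shiftsg (G : nat -> bool) e y s : 0 < e -> G (y + e) ->
  inD (shiftsg G e) (y + e + e) s =
  [|| s == 0, s == y + e + e | (e <= s) && inD G y (s - e)].
Proof.
move=> e_gt0 Gye; rewrite /inD /shiftsg.
have [->|s_gt0] := posnP s; first by rewrite subn0 addnK Gye /=; lia.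
have [->|s_neq] := eqVneq s (y + e + e); first by rewrite subnn addnK Gye /=; lia.
have [le_es|] := leqP e s; last by rewrite /= andbF.
have [le_sx|lt_xs] := leqP s (y + e + e); last by rewrite (_ : s - e <= y = false) //; lia.
rewrite (_ : (y + e + e - s == 0) = false); last lia.
rewrite (_ : y + e + e - s - e = y - (s - e)); last lia.
rewrite (_ : (e <= y + e + e - s) = (s - e <= y)); last lia.
by case: (s - e <= y); case: (G (s - e)).
Qed.

Lemma cardD2_eq_cardD (G : nat -> bool) y1 y2 :
  (forall a b, G a -> G b -> G (a + b)) -> y1 <= y2 -> G (y2 - y1) ->
  cardD2 G y1 y2 = cardD G y2.
Proof.
move=> Gadd le_y12 G_y21; rewrite /cardD2 /cardD (maxn_idPr le_y12).
apply: eq_count => s /=; case D1s: (inD G y1 s) => //=.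
move: D1s => /and3P[le_sy1 Gs Gy1s]; rewrite /inD Gs (_ : y2 - s = y1 - s + (y2 - y1)).
  by rewrite Gadd //; lia.
lia.
Qed.

Lemma cardD2_shiftsg (G : nat -> bool) e y1 y2 :
  0 < e -> y1 < y2 -> G (y1 + e) -> G (y2 + e) ->
  cardD2 (shiftsg G e) (y1 + e + e) (y2 + e + e) =
  cardD2 G y1 y2 + 2 + ~~ inD G y2 (y1 + e).
Proof.
move=> e_gt0 lt_y12 Gy1e Gy2e.
set x1 := y1 + e + e; set x2 := y2 + e + e.
rewrite /cardD2 !(maxn_idPr _); try lia.
set Q := fun t => inD G y1 t || inD G y2 t.
set B := fun s => (e <= s) && Q (s - e).
have Q_le t : Q t -> t <= y2 by rewrite /Q /inD; lia.
rewrite (eq_count (a2 := predU (pred1 0) (predU (pred1 x2) (predU (pred1 x1) B)))); last first.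
  move=> s /=; rewrite !inD_shiftsg // /B /Q -/x1 -/x2.
  move: (s == 0) (s == x1) (s == x2) (e <= s) (inD G y1 (s - e)) (inD G y2 (s - e)).
  by do 6!case.
rewrite !count_pred1U ?iota_uniq // !mem_iota.
have -> : count B (iota 0 x2.+1) = count Q (iota 0 y2.+1).
  rewrite (_ : x2.+1 = e + (y2 + e).+1); last lia.
  by rewrite count_iota_shift (@count_iota_cut _ y2.+1) //; lia.
have Bx1 : B x1 = inD G y2 (y1 + e).
  by rewrite /B /Q /x1 addnK leq_addl /= {1}/inD; lia.
have B0 : B 0 = false by rewrite /B leqNgt e_gt0.
have Bx2 : B x2 = false.
  by rewrite /B /Q /x2 addnK /inD; lia.
rewrite /= Bx1 B0 Bx2 /x1 /x2; case: (inD G y2 (y1 + e)) => /=; lia.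
Qed.

Lemma conductorP (G : nat -> bool) : numerical_semigroup G ->
  forall n, conductor G <= n -> G n.
Proof.
case=> _ _ [c Gc]; have [] // := natminP (P := fun d => forall n, d <= n -> G n).
by exists c.
Qed.

Lemma multiplicityP (G : nat -> bool) : numerical_semigroup G ->
  0 < multiplicity G /\ G (multiplicity G).
Proof.
case=> _ _ [c Gc]; have [] // := natminP (P := fun n => 0 < n /\ G n).
by exists c.+1; rewrite Gc.
Qed.

Section Delta.

Variables (G : nat -> bool) (c : nat).
Hypothesis Gc : forall n, c <= n -> G n.

Lemma delta1_le m m1 : m <= m1 -> G m1 -> delta1 G m <= cardD G m1.
Proof.
by move=> le_m Gm1; apply: (natminP (ex_intro _ _ _)).2; exists m1.
Qed.

Lemma delta1P m : exists m1, [/\ m <= m1, G m1 & delta1 G m = cardD G m1].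
Proof.
apply: (natminP (P := fun d => exists m1, [/\ m <= m1, G m1 & d = cardD G m1]) _).1.
by exists (cardD G (maxn m c)), (maxn m c); rewrite leq_maxl Gc ?leq_maxr.
Qed.

Lemma delta2_le m m1 m2 : m <= m1 -> m1 < m2 -> G m1 -> G m2 ->
  delta2 G m <= cardD2 G m1 m2.
Proof.
by move=> le_m lt_m12 Gm1 Gm2; apply: (natminP (ex_intro _ _ _)).2; exists m1, m2.
Qed.

Lemma delta2P m : exists m1 m2,
  [/\ m <= m1, m1 < m2, G m1, G m2 & delta2 G m = cardD2 G m1 m2].
Proof.
apply: (natminP (P := fun d => exists m1 m2,
  [/\ m <= m1, m1 < m2, G m1, G m2 & d = cardD2 G m1 m2]) _).1.
exists (cardD2 G (maxn m c) (maxn m c).+1), (maxn m c), (maxn m c).+1.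
by rewrite leq_maxl ltnSn !Gc ?leq_maxr // ltnW // ltnS leq_maxr.
Qed.

End Delta.

Section ShiftedSemigroup.

Variables (G : nat -> bool) (e c : nat).
Hypotheses (G0 : G 0) (Gadd : forall a b, G a -> G b -> G (a + b)).
Hypotheses (e_gt0 : 0 < e) (G_e : G e) (Gc : forall n, c <= n -> G n).

Lemma shiftsg_ge n : c + e <= n -> shiftsg G e n.
Proof.
move=> le_n; have [y def_n] : exists y, n = y + e by exists (n - e); lia.
by rewrite def_n shiftsg_addn // Gc //; lia.
Qed.

Lemma cardD2_addr y : cardD2 G y (y + e) = cardD G (y + e).
Proof. by rewrite cardD2_eq_cardD ?leq_addr ?addKn. Qed.

Lemma delta2_le_delta1 m : c <= m -> delta2 G m <= delta1 G (m + e).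
Proof.
move=> le_cm; have [m1 [le_m1 Gm1 ->]] := delta1P Gc (m + e).
have [y def_m1] : exists y, m1 = y + e by exists (m1 - e); lia.
subst m1.
by rewrite -cardD2_addr; apply: delta2_le; rewrite ?Gc //; lia.
Qed.

Lemma delta2_shiftsgP m : c <= m -> exists y1 y2, [/\ m <= y1, y1 < y2 &
  delta2 (shiftsg G e) (m + e + e) = cardD2 G y1 y2 + 2 + ~~ inD G y2 (y1 + e)].
Proof.
move=> le_cm; have [x1 [x2 [le_x1 lt_x12 _ _ ->]]] := delta2P shiftsg_ge (m + e + e).
have [y1 def_x1] : exists y1, x1 = y1 + e + e by exists (x1 - e - e); lia.
have [y2 def_x2] : exists y2, x2 = y2 + e + e by exists (x2 - e - e); lia.
subst x1 x2; exists y1, y2; split; [lia | lia | rewrite cardD2_shiftsg ?Gc //; lia].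
Qed.

Lemma delta2_shiftsg_ge m : c <= m ->
  delta2 G m + 2 <= delta2 (shiftsg G e) (m + e + e).
Proof.
move=> le_cm; have [y1 [y2 [le_my1 lt_y12 ->]]] := delta2_shiftsgP le_cm.
have : delta2 G m <= cardD2 G y1 y2 by apply: delta2_le; rewrite ?Gc //; lia.
lia.
Qed.

Lemma delta2_shiftsg_le m : c <= m ->
  delta2 (shiftsg G e) (m + e + e) <= delta1 G (m + e) + 2.
Proof.
move=> le_cm; have [m1 [le_m1 Gm1 ->]] := delta1P Gc (m + e).
have [y def_m1] : exists y, m1 = y + e by exists (m1 - e); lia.
subst m1; have inD_self : inD G (y + e) (y + e) by rewrite /inD leqnn Gm1 subnn G0.
apply: (@leq_trans (cardD2 (shiftsg G e) (y + e + e) (y + e + e + e))).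
  by apply: delta2_le; rewrite ?shiftsg_ge //; lia.
by rewrite cardD2_shiftsg ?Gc ?inD_self ?cardD2_addr //; lia.
Qed.

Lemma delta1_le_delta2_of_shiftsg m : c <= m ->
  delta2 (shiftsg G e) (m + e + e) = delta2 G m + 2 -> delta1 G (m + e) <= delta2 G m.
Proof.
move=> le_cm; have [y1 [y2 [le_my1 lt_y12 ->]]] := delta2_shiftsgP le_cm.
have : delta2 G m <= cardD2 G y1 y2 by apply: delta2_le; rewrite ?Gc //; lia.
have [/and3P[le_y12e _ G_y21e] _|] := boolP (inD G y2 (y1 + e)); last lia.
have G_y21 : G (y2 - y1) by rewrite (_ : y2 - y1 = y2 - (y1 + e) + e) ?Gadd //; lia.
have : delta1 G (m + e) <= cardD G y2 by apply: delta1_le; rewrite ?Gc //; lia.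
rewrite cardD2_eq_cardD //; lia.
Qed.

End ShiftedSemigroup.

Theorem lemma4p14 (G : nat -> bool) (k : nat) :
  numerical_semigroup G ->
  let e := multiplicity G in
  let c := conductor G in
  let Ge := shiftsg G e in
  let c' := c + e in
  (delta2 Ge (c' + e + k) = delta2 G (c + k) + 2 <->
   delta1 G (c + e + k) = delta2 G (c + k)).
Proof.
move=> sgG e c Ge c'; rewrite {}/Ge {}/c'.
have [G0 Gadd _] := sgG.
have [e_gt0 G_e] : 0 < e /\ G e := multiplicityP sgG.
have Gc : forall n, c <= n -> G n := conductorP sgG.
clearbody e c.
have le_c := leq_addr k c.
have -> : c + e + e + k = c + k + e + e by lia.
have -> : c + e + k = c + k + e by lia.
have := delta2_le_delta1 G0 Gadd e_gt0 G_e Gc le_c.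
split => [/(delta1_le_delta2_of_shiftsg G0 Gadd e_gt0 G_e Gc le_c) | eq_d12]; first lia.
have := delta2_shiftsg_ge G0 e_gt0 G_e Gc le_c.
have := delta2_shiftsg_le G0 Gadd e_gt0 G_e Gc le_c.
lia.
Qed.
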